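(* Let $P$ be a finite poset and $R$ a consistent restriction function on $P$. Then the poset $\Gamma(P,R)$ is isomorphic to the dual of the poset of meet-irreducible elements of the lattice $\mathrm{Inc}^R(P)$ (with the order induced from $\mathrm{Inc}^R(P)$). Consequently, the order ideals of $\Gamma(P,R)$ are in bijection with $\mathrm{Inc}^R(P)$.
   Context: A restriction function on a finite poset $P$ assigns to each $p\in P$ a nonempty finite set $R(p)\subseteq\mathbb{Z}$. $\mathrm{Inc}^R(P)$ is the set of increasing labelings: functions $f:P\to\mathbb{Z}$ with $f(p)\in R(p)$ for all $p$ and $p_1<p_2\Rightarrow f(p_1)<f(p_2)$. It is partially ordered by $f\le g$ iff $f(p)\le g(p)$ for all $p$; this is a finite distributive lattice (meet and join are pointwise min and max). An element $x$ of a lattice is meet-irreducible if it is not the top element and $x=y\wedge z$ implies $x=y$ or $x=z$. $R$ is consistent if for every cover relation $x\lessdot y$ in $P$, $\min R(x)<\min R(y)$ and $\max R(x)<\max R(y)$. Write $R(p)^*=R(p)\setminus\{\max R(p)\}$, $R(p)_{>k}$ for the smallest element of $R(p)$ greater than $k$, and $R(p)_{<k}$ for the largest element of $R(p)$ less than $k$. $\Gamma(P,R)$ is the poset on the set $\{(p,k): p\in P,\ k\in R(p)^*\}$ whose order is the reflexive–transitive closure of the relation $(p_1,k_1)\lessdot(p_2,k_2)$ (the covering relations of $\Gamma(P,R)$), which holds iff either (1) $p_1=p_2$ and $R(p_1)_{>k_2}=k_1$; or (2) $p_1\lessdot p_2$ in $P$, $k_1=R(p_1)_{<k_2}$ (and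 $k_1\ne\max R(p_1)$), and there is no $k\in R(p_2)$ with $k>k_2$ and $R(p_1)_{<k}=k_1$. An order ideal of a poset is a downward-closed subset. *)

From HB Require Import structures.
From mathcomp Require Import all_boot all_order all_algebra.
From Stdlib Require Import Relation_Operators.
Set Implicit Arguments. Unset Strict Implicit. Unset Printing Implicit Defensive.
Import Order.TTheory GRing.Theory Num.Theory.

Section IncLabelings.
Local Open Scope ring_scope.

(* A finite set of integers is represented by a (nonempty) sequence. *)
Definition minS (s : seq int) : int := \big[Num.min/head 0 s]_(k <- s) k.
Definition maxS (s : seq int) : int := \big[Num.max/head 0 s]_(k <- s) k.

Context {d : Order.disp_t} {P : finPOrderType d}.
Variable R : P -> seq int.

Definition pcover (x y : P) : bool :=
  (x < y)%O && [forall z : P, ~~ ((x < z)%O && (z < y)%O)].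

Definition restriction_fun : Prop := forall p, R p != [::].

Definition consistent : Prop :=
  forall x y : P, pcover x y ->
    minS (R x) < minS (R y) /\ maxS (R x) < maxS (R y).

Definition is_succ (S : seq int) (k k1 : int) : Prop :=
  [/\ k1 \in S, k < k1 & forall k', k' \in S -> k < k' -> k1 <= k'].
Definition is_pred (S : seq int) (k k1 : int) : Prop :=
  [/\ k1 \in S, k1 < k & forall k', k' \in S -> k' < k -> k' <= k1].

Definition gvert (x : P * int) : Prop :=
  x.2 \in R x.1 /\ x.2 <> maxS (R x.1).

Definition gcov_raw (x y : P * int) : Prop :=
  let: (p1, k1) := x in let: (p2, k2) := y in
  (p1 = p2 /\ is_succ (R p1) k2 k1) \/
  [/\ pcover p1 p2, is_pred (R p1) k2 k1, k1 <> maxS (R p1) &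
      ~ (exists k, [/\ k \in R p2, k2 < k & is_pred (R p1) k k1])].

Definition gcov (x y : P * int) : Prop := [/\ gvert x, gvert y & gcov_raw x y].

Definition gle (x y : P * int) : Prop := clos_refl_trans (P * int) gcov x y.

Definition Gamma := {x : P * int | gvert x}.

Definition inc (f : {ffun P -> int}) : Prop :=
  (forall p, f p \in R p) /\ (forall p1 p2 : P, (p1 < p2)%O -> f p1 < f p2).

Definition fle (f g : {ffun P -> int}) : Prop := forall p, f p <= g p.

Definition fmeet (f g : {ffun P -> int}) : {ffun P -> int} :=
  [ffun p => Num.min (f p) (g p)].

Definition is_top (f : {ffun P -> int}) : Prop :=
  inc f /\ forall g, inc g -> fle g f.

Definition meet_irreducible (f : {ffun P -> int}) : Prop :=
  [/\ inc f, ~ is_top f &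
      forall g h, inc g -> inc h -> f = fmeet g h -> f = g \/ f = h].

Definition IncT := {f : {ffun P -> int} | inc f}.
Definition MeetIrr := {f : {ffun P -> int} | meet_irreducible f}.

Definition order_ideal (I : Gamma -> Prop) : Prop :=
  forall u v : Gamma, gle (sval u) (sval v) -> I v -> I u.
Definition Ideal := {I : Gamma -> Prop | order_ideal I}.

End IncLabelings.

From HB Require Import structures.
From mathcomp Require Import all_boot all_order all_algebra.
From Stdlib Require Import Relation_Operators.
From mathcomp Require Import zify boolp.
Import Order.TTheory GRing.Theory Num.Theory.
Local Open Scope ring_scope.
Set Implicit Arguments. Unset Strict Implicit. Unset Printing Implicit Defensive.

(* An increasing labeling f corresponds to the set of vertices (p, k) of Gamma(P, R)
   with f(p) <= k.  This set is an order ideal, and conversely an ideal I gives back the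
   labeling p |-> min ({k | (p, k) in I} U {max R(p)}).  That labeling is increasing
   because along a cover p1 <. p2 of P the vertex (p1, R(p1)_{<k}) lies below (p2, k) in
   Gamma(P, R), which is where consistency of R is needed.  The correspondence reverses
   the order and turns pointwise minima into unions, so meet-irreducible labelings
   correspond to union-irreducible ideals.  These are the principal ones: if v is a
   maximal vertex of an ideal I, then I is the union of the ideal generated by v and
   of {u in I | ~ v <= u}. *)

Lemma bigmin_mem (dT : Order.disp_t) (T : orderType dT) (x : T) (r : seq T) :
  (\big[Order.min/x]_(i <- r) i \in x :: r)%O.
Proof.
rewrite big_seq; apply: (big_ind (fun y => y \in x :: r)).
- exact: mem_head.
- by move=> a b ha hb; case: (leP a b).
- by move=> i ir; rewrite inE ir orbT.
Qed.

Lemma bigmax_mem (dT : Order.disp_t) (T : orderType dT) (x : T) (r : seq T) :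
  (\big[Order.max/x]_(i <- r) i \in x :: r)%O.
Proof.
rewrite big_seq; apply: (big_ind (fun y => y \in x :: r)).
- exact: mem_head.
- by move=> a b ha hb; case: (leP a b).
- by move=> i ir; rewrite inE ir orbT.
Qed.

Lemma minS_mem s : s != [::] -> minS s \in s.
Proof.
rewrite /minS; case: s => //= a s _.
by case/predU1P: (bigmin_mem a (a :: s)) => [->|//]; exact: mem_head.
Qed.

Lemma minS_le s k : k \in s -> minS s <= k.
Proof. by move=> ks; exact: (ge_bigmin_seq _ _ _ id ks). Qed.

Lemma maxS_mem s : s != [::] -> maxS s \in s.
Proof.
rewrite /maxS; case: s => //= a s _.
by case/predU1P: (bigmax_mem a (a :: s)) => [->|//]; exact: mem_head.
Qed.

Lemma maxS_ge s k : k \in s -> k <= maxS s.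
Proof. by move=> ks; exact: (le_bigmax_seq _ _ _ id ks). Qed.

Lemma is_succ_exists S k k' : k' \in S -> k < k' -> exists k1, is_succ S k k1.
Proof.
move=> k'S kk'; set S' := [seq i <- S | k < i].
have [mS km] : \big[Num.min/k']_(i <- S') i \in S /\ k < \big[Num.min/k']_(i <- S') i.
  by have := bigmin_mem k' S'; rewrite inE mem_filter => /predU1P[-> //|/andP[-> ->]].
exists (\big[Num.min/k']_(i <- S') i); split=> // j jS kj.
by apply: (ge_bigmin_seq _ _ _ id); rewrite // /S' mem_filter kj.
Qed.

Lemma is_pred_exists S k k' : k' \in S -> k' < k -> exists k1, is_pred S k k1.
Proof.
move=> k'S k'k; set S' := [seq i <- S | i < k].
have [mS mk] : \big[Num.max/k']_(i <- S') i \in S /\ \big[Num.max/k']_(i <- S') i < k.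
  by have := bigmax_mem k' S'; rewrite inE mem_filter => /predU1P[-> //|/andP[-> ->]].
exists (\big[Num.max/k']_(i <- S') i); split=> // j jS jk.
by apply: (le_bigmax_seq _ _ _ id); rewrite // /S' mem_filter jk.
Qed.

Lemma is_pred_between S k k' k'' k1 :
  is_pred S k k1 -> is_pred S k'' k1 -> k <= k' -> k' <= k'' -> is_pred S k' k1.
Proof.
move=> [k1S k1k _] [_ _ k1max] kk' k'k''; split=> // [|j jS jk'].
- exact: lt_le_trans k1k kk'.
- exact: k1max jS (lt_le_trans jk' k'k'').
Qed.

Lemma seq_maximal (T : eqType) (r : T -> T -> Prop) (Q : T -> Prop) (s : seq T) :
  (forall x y z, r x y -> r y z -> r x z) -> (exists2 x, x \in s & Q x) ->
  exists2 x, x \in s /\ Q x & forall y, y \in s -> Q y -> r x y -> r y x.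
Proof.
move=> r_trans; elim: s => [[x //]|a s IH] [x0 x0s Qx0].
have [/IH [x [xs Qx] x_max] | none] := EM (exists2 x, x \in s & Q x); last first.
  have Qa : Q a by case/predU1P: x0s Qx0 => [<- //|x0s Qx0]; case: none; exists x0.
  exists a => [|y /predU1P[-> // | ys Qy]]; first by rewrite mem_head.
  by case: none; exists y.
have [[Qa xa nax] | not_above] := EM [/\ Q a, r x a & ~ r a x].
- exists a => [|y /predU1P[-> // | ys Qy ay]]; first by rewrite mem_head.
  exact: r_trans (x_max y ys Qy (r_trans _ _ _ xa ay)) xa.
- exists x => [|y /predU1P[-> Qa xa | ys]]; first by rewrite inE xs orbT.
  + by apply: contrapT => nax; apply: not_above.
  + exact: x_max.
Qed.

Lemma cover_homo_lt (dP : Order.disp_t) (P : finPOrderType dP)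
    (dT : Order.disp_t) (T : porderType dT) (g : P -> T) :
  (forall x y, pcover x y -> (g x < g y)%O) -> {homo g : x y / (x < y)%O}.
Proof.
move=> g_cover x y; have [n] := ubnP #|[set z | (x < z < y)%O]|.
elim: n x y => // n IH x y; rewrite ltnS => card_xy xy.
have [no_between|] := boolP [forall z, ~~ (x < z < y)%O].
  by apply: g_cover; rewrite /pcover xy.
rewrite negb_forall => /existsP[z]; rewrite negbK => /andP[xz zy].
have shrink x' y' : (x <= x')%O -> (y' <= y)%O -> ~~ (x' < z < y')%O ->
    (#|[set w | (x' < w < y')%O]| < n)%N.
  move=> xx' y'y zxy'; apply: leq_trans card_xy; apply/proper_card/properP; split.
  - apply/subsetP => w; rewrite !inE => /andP[x'w wy'].
    by rewrite (le_lt_trans xx' x'w) (lt_le_trans wy' y'y).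
  - by exists z; rewrite !inE ?xz ?zy.
apply: (lt_trans (IH x z _ xz) (IH z y _ zy)); apply: shrink;
  by rewrite ?lexx ?ltW ?ltxx ?andbF.
Qed.

Section IncreasingLabelings.
Context {d : Order.disp_t} {P : finPOrderType d} (R : P -> seq int).
Hypothesis R_nonempty : restriction_fun R.
Hypothesis R_consistent : consistent R.

Local Notation M p := (maxS (R p)).

Lemma maxR_mem p : M p \in R p.
Proof. exact: maxS_mem. Qed.

Lemma gvertP x : gvert R x <-> x.2 \in R x.1 /\ x.2 < M x.1.
Proof.
split=> [[kR /eqP kM] | [kR kM]]; split=> //.
- by rewrite lt_neqAle kM maxS_ge.
- by move=> e; rewrite e ltxx in kM.
Qed.

Lemma gle_cases x y : gle R x y -> (x.1 < y.1)%O \/ x.1 = y.1 /\ y.2 <= x.2.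
Proof.
elim=> {x y} [[p1 k1] [p2 k2] [_ _ [[-> [_ k2k1 _]] | [cov _ _ _]]] | x | x y z _ xy _ yz].
- by right; split=> //; exact: ltW.
- by left; case/andP: cov.
- by right.
- case: xy => [xy | [-> yx]]; case: yz => [yz | [<- zy]].
  + by left; exact: lt_trans xy yz.
  + by left.
  + by left.
  + by right; split=> //; exact: le_trans zy yx.
Qed.

Lemma gle_anti x y : gle R x y -> gle R y x -> x = y.
Proof.
case: x y => [p1 k1] [p2 k2] /gle_cases /= + /gle_cases /=.
case=> [lt12 | [-> le21]] [lt21 | [e21 le12]].
- by have := lt_trans lt12 lt21; rewrite ltxx.
- by move: lt12; rewrite e21 ltxx.
- by rewrite ltxx in lt21.
- by congr pair; apply: le_anti; rewrite le12 le21.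
Qed.

Lemma gle_label_le f x y : inc R f -> gle R x y -> f y.1 <= y.2 -> f x.1 <= x.2.
Proof.
case=> f_mem f_lt; elim=> {x y} [[p1 k1] [p2 k2] | // | x y z _ xy _ yz /yz /xy //].
case=> _ _ [[-> [_ k2k1 _]] | [cov [_ _ k1max] _ _]] /= fk2.
- exact: le_trans fk2 (ltW k2k1).
- apply: k1max (f_mem p1) _; case/andP: cov => p12 _.
  exact: lt_le_trans (f_lt _ _ p12) fk2.
Qed.

Lemma gle_fibre p a b : gvert R (p, a) -> gvert R (p, b) -> b <= a -> gle R (p, a) (p, b).
Proof.
move=> va; have [n] := ubnP (absz (a - b)); elim: n b => // n IH b dist_lt vb ba.
have [<-|ab] := eqVneq a b; first exact: rt_refl.
have [/= aR aM] := (gvertP _).1 va.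
have lt_ba : b < a by rewrite lt_neqAle eq_sym ab.
have [b' [b'R bb' b'min]] := is_succ_exists aR lt_ba.
have b'a : b' <= a := b'min a aR lt_ba.
have vb' : gvert R (p, b') by apply/gvertP; split=> //; exact: le_lt_trans b'a aM.
apply: (rt_trans _ _ _ (p, b')); first by apply: IH; rewrite // -ltnS; lia.
by apply: rt_step; split=> //; left.
Qed.

Lemma gle_cover_pred p1 p2 k1 k2 : pcover p1 p2 -> gvert R (p1, k1) -> gvert R (p2, k2) ->
  is_pred (R p1) k2 k1 -> gle R (p1, k1) (p2, k2).
Proof.
move=> cov v1; have [n] := ubnP (absz (M p2 - k2)); elim: n k2 => // n IH k2 dist_lt v2 pk2.
have [[k [kR k2k pk]] | no_k] := EM (exists k, [/\ k \in R p2, k2 < k & is_pred (R p1) k k1]);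
  last by apply: rt_step; split=> //; right; split=> //; case: v1.
have [k2' [k2'R k2k2' k2'min]] := is_succ_exists kR k2k.
have k2'k := k2'min k kR k2k.
have v2' : gvert R (p2, k2').
  apply/gvertP; split=> //=; rewrite lt_neqAle maxS_ge // andbT; apply/eqP => k2'M.
  have kM : k = M p2 by apply: le_anti; rewrite maxS_ge // -k2'M k2'k.
  have [_ /= k1M] := (gvertP _).1 v1; case: pk => _ _ /(_ _ (maxR_mem p1)).
  by rewrite kM (R_consistent cov).2 leNgt k1M => /(_ isT).
apply: (rt_trans _ _ _ (p2, k2')).
- apply: IH => //; last exact: is_pred_between pk2 pk (ltW k2k2') k2'k.
  by have := maxS_ge k2'R; lia.
- by apply: rt_step; split=> //; left.
Qed.

Definition lift_pred (I : Gamma R -> Prop) (x : P * int) : Prop :=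
  exists h : gvert R x, I (exist _ x h).

Definition ideal_of (f : {ffun P -> int}) (u : Gamma R) : Prop := f (sval u).1 <= (sval u).2.

Definition labeling_of (I : Gamma R -> Prop) : {ffun P -> int} :=
  [ffun p => \big[Num.min/M p]_(k <- [seq k <- R p | `[< lift_pred I (p, k) >]]) k].

Lemma labeling_of_le I p k : k \in R p -> lift_pred I (p, k) -> labeling_of I p <= k.
Proof.
move=> kR Ik; rewrite ffunE; apply: (ge_bigmin_seq _ _ _ id) => //.
by rewrite mem_filter kR andbT; apply/asboolP.
Qed.

Lemma labeling_of_le_max I p : labeling_of I p <= M p.
Proof. by rewrite ffunE bigmin_le_id. Qed.

Lemma labeling_ofP I p :
  labeling_of I p = M p \/ labeling_of I p \in R p /\ lift_pred I (p, labeling_of I p).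
Proof.
have : labeling_of I p \in M p :: [seq k <- R p | `[< lift_pred I (p, k) >]].
  by rewrite ffunE; exact: bigmin_mem.
by rewrite inE mem_filter => /predU1P[|/andP[/asboolP ? ?]]; [left | right].
Qed.

Lemma labeling_of_mem I p : labeling_of I p \in R p.
Proof. by case: (labeling_ofP I p) => [->|[]//]; exact: maxR_mem. Qed.

Lemma labeling_of_cover I : order_ideal I ->
  forall p1 p2, pcover p1 p2 -> labeling_of I p1 < labeling_of I p2.
Proof.
move=> I_ideal p1 p2 cov; have [min_lt max_lt] := R_consistent cov.
case: (labeling_ofP I p2) => [-> | [k2R [v2 I2]]].
  exact: le_lt_trans (labeling_of_le_max I p1) max_lt.
set k2 := labeling_of I p2 in k2R v2 I2 *.
have [k1 pk] : exists k1, is_pred (R p1) k2 k1.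
  exact: is_pred_exists (minS_mem (R_nonempty p1)) (lt_le_trans min_lt (minS_le k2R)).
have [k1R k1k2 _] := pk; apply: le_lt_trans k1k2.
case: (leP (M p1) k1) => [Mk1 | k1M]; first exact: le_trans (labeling_of_le_max I p1) Mk1.
have v1 : gvert R (p1, k1) by apply/gvertP.
apply: labeling_of_le k1R _; exists v1.
exact: (I_ideal (exist _ _ v1) (exist _ _ v2) (gle_cover_pred cov v1 v2 pk) I2).
Qed.

Lemma labeling_of_inc I : order_ideal I -> inc R (labeling_of I).
Proof.
by move=> I_ideal; split; [exact: labeling_of_mem | exact/cover_homo_lt/labeling_of_cover].
Qed.

Lemma order_ideal_ideal_of f : inc R f -> order_ideal (ideal_of f).
Proof. by move=> f_inc u v; exact: gle_label_le. Qed.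

Lemma ideal_ofK I : order_ideal I -> forall u, ideal_of (labeling_of I) u <-> I u.
Proof.
move=> I_ideal [[p k] v]; rewrite /ideal_of /=; split=> [lk | Iu].
- have [/= kR kM] := (gvertP _).1 v.
  case: (labeling_ofP I p) => [lM | [_ [vl Il]]].
    by move: kM; rewrite -lM ltNge lk.
  exact: (I_ideal (exist _ _ v) (exist _ _ vl) (gle_fibre v vl lk) Il).
- by apply: labeling_of_le (proj1 v) _; exists v.
Qed.

Lemma labeling_ofK f : inc R f -> labeling_of (ideal_of f) = f.
Proof.
move=> [f_mem f_lt]; apply/ffunP => p; apply: le_anti; apply/andP; split.
- case: (ltP (f p) (M p)) => [fM | Mf]; last exact: le_trans (labeling_of_le_max _ p) Mf.
  have vf : gvert R (p, f p) by apply/gvertP; split; [exact: f_mem |].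
  by apply: labeling_of_le (f_mem p) _; exists vf; rewrite /ideal_of.
- by case: (labeling_ofP (ideal_of f) p) => [-> | [_ [_]]] //; exact: maxS_ge.
Qed.

Lemma ideal_of_inj f g : inc R f -> inc R g ->
  (forall u, ideal_of f u <-> ideal_of g u) -> f = g.
Proof.
move=> f_inc g_inc fg; rewrite -(labeling_ofK f_inc) -(labeling_ofK g_inc).
by congr labeling_of; apply/funext => u; apply/propext.
Qed.

Lemma fle_ideal_of f g : inc R f -> inc R g ->
  fle f g <-> (forall u, ideal_of g u -> ideal_of f u).
Proof.
move=> [f_mem _] [g_mem _]; split=> [fg u | gf p]; first exact: le_trans (fg _).
case: (ltP (g p) (M p)) => [gM | Mg]; last exact: le_trans (maxS_ge (f_mem p)) Mg.
have vg : gvert R (p, g p) by apply/gvertP; split; [exact: g_mem |].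
exact: (gf (exist _ _ vg) (lexx _)).
Qed.

Lemma fle_labeling_of I J : order_ideal I -> order_ideal J ->
  fle (labeling_of I) (labeling_of J) <-> (forall u, J u -> I u).
Proof.
move=> I_ideal J_ideal.
apply: iff_trans (fle_ideal_of (labeling_of_inc I_ideal) (labeling_of_inc J_ideal)) _.
by split=> IJ u /(ideal_ofK J_ideal) Ju; apply/(ideal_ofK I_ideal); exact: IJ.
Qed.

Lemma fmeet_inc g h : inc R g -> inc R h -> inc R (fmeet g h).
Proof.
move=> [g_mem g_lt] [h_mem h_lt]; split=> [p | p1 p2 p12]; rewrite !ffunE.
- by case: leP.
- by rewrite lt_min !gt_min g_lt ?h_lt ?orbT.
Qed.

Lemma ideal_of_fmeet g h u : ideal_of (fmeet g h) u <-> ideal_of g u \/ ideal_of h u.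
Proof. by rewrite /ideal_of ffunE ge_min; split=> [/orP | [] ->]; rewrite ?orbT. Qed.

Lemma is_topP f : inc R f -> is_top R f <-> forall u, ~ ideal_of f u.
Proof.
move=> f_inc; split=> [[_ f_top] u fu | f_empty]; last first.
  by split=> // g g_inc; apply/fle_ideal_of => // u /f_empty.
have empty_ideal : order_ideal (fun _ : Gamma R => False) by [].
have /(fle_ideal_of (labeling_of_inc empty_ideal) f_inc) := f_top _ (labeling_of_inc empty_ideal).
by move/(_ u fu)/(ideal_ofK empty_ideal).
Qed.

Definition down (v u : Gamma R) : Prop := gle R (sval u) (sval v).

Lemma down_ideal v : order_ideal (down v).
Proof. by move=> u w uw wv; exact: rt_trans uw wv. Qed.
Arguments down_ideal : clear implicits.

Lemma down_subP u v : (forall w, down u w -> down v w) <-> gle R (sval u) (sval v).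
Proof. by split=> [/(_ u (rt_refl _ _ _)) // | uv w wu]; exact: rt_trans wu uv. Qed.

Lemma meet_irreducible_down v : meet_irreducible R (labeling_of (down v)).
Proof.
set f := labeling_of (down v); have f_inc := labeling_of_inc (down_ideal v).
have fv : ideal_of f v by apply/(ideal_ofK (down_ideal v)); exact: rt_refl.
have absorb g : inc R g -> (forall u, ideal_of g u -> ideal_of f u) -> ideal_of g v -> f = g.
  move=> g_inc gf gv; apply: ideal_of_inj => // u.
  split=> [/(ideal_ofK (down_ideal v)) uv | /gf //]; exact: gle_label_le g_inc uv gv.
split=> // [/(is_topP f_inc)/(_ v fv) // | g h g_inc h_inc fgh].
have fgh_sub (u : Gamma R) : ideal_of g u \/ ideal_of h u -> ideal_of f u.
  by rewrite fgh => /ideal_of_fmeet.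
have /ideal_of_fmeet[gv | hv] : ideal_of (fmeet g h) v by rewrite -fgh.
- by left; apply: absorb => // u gu; apply: fgh_sub; left.
- by right; apply: absorb => // u hu; apply: fgh_sub; right.
Qed.

Definition vertices : seq (P * int) := [seq (p, k) | p <- enum P, k <- R p].

Lemma gamma_maximal (Q : Gamma R -> Prop) : (exists u, Q u) ->
  exists2 v, Q v & forall u, Q u -> gle R (sval v) (sval u) -> gle R (sval u) (sval v).
Proof.
have vertices_mem (u : Gamma R) : sval u \in vertices.
  case: u => [[p k] [/= kR _]]; apply/allpairsPdep; exists p, k; by rewrite mem_enum.
case=> [[x vx] Qx]; have Q_vertex : exists2 x, x \in vertices & lift_pred Q x.
  by exists x; [exact: (vertices_mem (exist _ x vx)) | exists vx].
have {x vx Qx} [x [_ [vx Qx]] x_max] := seq_maximal (@rt_trans _ (gcov R)) Q_vertex.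
exists (exist _ x vx) => // [[y vy]] Qy xy.
by apply: x_max xy; [exact: vertices_mem (exist _ y vy) | exists vy].
Qed.

Lemma meet_irreducible_principal f : meet_irreducible R f -> exists v, labeling_of (down v) = f.
Proof.
case=> f_inc f_ntop f_irr.
have f_nonempty : exists u, ideal_of f u.
  apply: contrapT => f_empty; apply/f_ntop/(is_topP f_inc) => u fu.
  by apply: f_empty; exists u.
have [v fv v_max] := gamma_maximal f_nonempty.
pose J u := ideal_of f u /\ ~ gle R (sval v) (sval u).
have J_ideal : order_ideal J.
  move=> u w uw [fw vw]; split; first exact: order_ideal_ideal_of f_inc _ _ uw fw.
  by move=> vu; apply: vw; exact: rt_trans vu uw.
have down_inc := labeling_of_inc (down_ideal v); have J_inc := labeling_of_inc J_ideal.
have f_split : f = fmeet (labeling_of (down v)) (labeling_of J).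
  apply: (ideal_of_inj f_inc (fmeet_inc down_inc J_inc)) => u.
  split=> [fu | /ideal_of_fmeet].
  - apply/ideal_of_fmeet; have [vu | nvu] := EM (gle R (sval v) (sval u)).
    + by left; apply/(ideal_ofK (down_ideal v)); exact: v_max.
    + by right; apply/(ideal_ofK J_ideal).
  - case=> [/(ideal_ofK (down_ideal v)) uv | /(ideal_ofK J_ideal)[] //].
    exact: order_ideal_ideal_of f_inc _ _ uv fv.
have [|fJ] := f_irr _ _ down_inc J_inc f_split; first by exists v.
have [_] : J v by apply/(ideal_ofK J_ideal); rewrite -fJ.
by case; exact: rt_refl.
Qed.

Lemma gamma_meet_irreducible_anti_iso :
  exists phi : Gamma R -> MeetIrr R, bijective phi /\
    forall u v : Gamma R, gle R (sval u) (sval v) <-> fle (sval (phi v)) (sval (phi u)).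
Proof.
pose phi v : MeetIrr R := exist _ _ (meet_irreducible_down v).
have phi_anti u v : gle R (sval u) (sval v) <-> fle (sval (phi v)) (sval (phi u)).
  exact: iff_sym (iff_trans (fle_labeling_of (down_ideal v) (down_ideal u)) (down_subP u v)).
have phi_inj : injective phi.
  move=> [x vx] [y vy] /(congr1 sval) e; apply: eq_exist; apply: gle_anti.
  - by apply/(phi_anti (exist _ x vx) (exist _ y vy)); rewrite e.
  - by apply/(phi_anti (exist _ y vy) (exist _ x vx)); rewrite e.
have phi_surj (m : MeetIrr R) : exists v, phi v = m.
  case: m => f f_irr; have [v fv] := meet_irreducible_principal f_irr.
  by exists v; exact: eq_exist.
exists phi; split=> //; exists (fun m => projT1 (cid (phi_surj m))) => [v | m].
- by apply: phi_inj; case: cid.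
- by case: cid.
Qed.

Lemma ideal_labeling_bij : exists psi : Ideal R -> IncT R, bijective psi.
Proof.
exists (fun I => exist _ _ (labeling_of_inc (svalP I))).
exists (fun f => exist _ _ (order_ideal_ideal_of (svalP f))) => [[I I_ideal] | [f f_inc]].
- by apply: eq_exist; apply/funext => u; apply/propext; exact: ideal_ofK.
- by apply: eq_exist; exact: labeling_ofK.
Qed.

End IncreasingLabelings.

Theorem theorem2p14 (d : Order.disp_t) (P : finPOrderType d) (R : P -> seq int) :
  restriction_fun R -> consistent R ->
  (exists phi : Gamma R -> MeetIrr R,
      bijective phi /\
      forall u v : Gamma R,
        gle R (sval u) (sval v) <-> fle (sval (phi v)) (sval (phi u))) /\
  (exists psi : Ideal R -> IncT R, bijective psi).
Proof.
move=> R_nonempty R_consistent; split.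
- exact: gamma_meet_irreducible_anti_iso.
- exact: ideal_labeling_bij.
Qed.
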